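(* Let $n\in\mathbb{N}$ with $n\ge2$, $S:=\{0,\dots,n-1\}$, and let $C\subseteq\operatorname{codes}(S)$ be a fundamental set. Let $\rho,\sigma\in(0,\infty)^S$ be such that $\alpha(x)|_\rho\le 2\pi\le\alpha(x)|_\sigma$ for all $x\in C$. Then \[ \frac{\sigma(n-2)}{\sigma(n-1)}\le\frac{\rho(n-2)}{\rho(n-1)}. \]
   Context: A coronal code over $S$ of length $m$ is a formal string $x=c:p_0p_1\dots p_{m-1}$ with $c,p_i\in S$; $\operatorname{center}(x)=c$, $\operatorname{petals}(x)=\{p_0,\dots,p_{m-1}\}$; codes are identified up to rotation/reversal of the petal string, giving $\operatorname{codes}(S)$. For $a,b,c\in S$ (indeterminates), $c^a_b:=\arccos\!\Big(\frac{(c+a)^2+(c+b)^2-(a+b)^2}{2(c+a)(c+b)}\Big)$, and $\alpha(x):=\sum_{i=0}^{m-1} c^{p_i}_{p_{i+1\bmod m}}$. For $\rho\in(0,\infty)^S$, $\alpha(x)|_\rho$ is the value obtained by substituting $\rho(s)$ for each symbol $s$. A nonempty $C\subseteq\operatorname{codes}(S)$ is fundamental if $\{\operatorname{center}(x):x\in C\}=\{0,\dots,n-2\}$ and for every nonempty $K\subseteq\{0,\dots,n-2\}$ there is $D\subseteq C$ with $\{\operatorname{center}(x):x\in D\}=K$ and $\big(\bigcup_{x\in D}\operatorname{petals}(x)\big)\setminus K\ne\emptyset$. *)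

From Stdlib Require Import Reals.
From mathcomp Require Import all_boot.
Set Implicit Arguments. Unset Strict Implicit. Unset Printing Implicit Defensive.

Open Scope R_scope.

(* A coronal code over S = {0,...,n-1} ('I_n): a center and a petal string
   p_0 ... p_{m-1}.  We work with representatives (c, s); every notion used
   below (center, petal set, alpha) is invariant under rotation/reversal of
   the petal string, so sets of codes can be given by sets of representatives. *)
Definition code (n : nat) : Type := ('I_n * seq 'I_n)%type.

Definition center {n} (x : code n) : 'I_n := x.1.
Definition petals {n} (x : code n) : seq 'I_n := x.2.

Definition angle (c a b : R) : R :=
  acos (((c + a)^2 + (c + b)^2 - (a + b)^2) / (2 * (c + a) * (c + b))).

(* alpha(x)|_rho = sum_{i<m} c^{p_i}_{p_{i+1 mod m}} with symbols s
   replaced by rho(s); rho : nat -> R is read only on S = {0,..,n-1}. *)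
Definition alpha_at {n} (rho : nat -> R) (x : code n) : R :=
  let s := petals x in
  foldr Rplus 0
    (map (fun pq : 'I_n * 'I_n =>
            angle (rho (val (center x))) (rho (val pq.1)) (rho (val pq.2)))
         (zip s (rot 1 s))).

Definition fundamental (n : nat) (C : code n -> Prop) : Prop :=
  (exists x, C x) /\
  (forall k : 'I_n, (exists x, C x /\ center x = k) <-> (val k <= n - 2)%nat) /\
  (forall K : 'I_n -> Prop,
     (exists k, K k) -> (forall k, K k -> (val k <= n - 2)%nat) ->
     exists D : code n -> Prop,
       (forall x, D x -> C x) /\
       (forall k, (exists x, D x /\ center x = k) <-> K k) /\
       (exists x p, D x /\ p \in petals x /\ ~ K p)).

(* Let r i := sigma i / rho i and suppose r does not attain its maximum t at n-1.
   The centers K where r = t avoid n-1, so fundamentality yields a code x of C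
   centred in K with a petal p outside K.  The rescaled radii sigma / t agree
   with rho at the center of x and lie below rho everywhere, strictly at p.
   Since the angle c^a_b is invariant under scaling and increasing in a and b,
   alpha(x)|_sigma = alpha(x)|_(sigma/t) < alpha(x)|_rho <= 2 pi, contradicting
   2 pi <= alpha(x)|_sigma.  Hence r (n-2) <= r (n-1), which is the claim. *)
From Stdlib Require Import Reals Lra Lia.
From mathcomp Require Import all_boot zify.
Set Implicit Arguments. Unset Strict Implicit.
Open Scope R_scope.

Lemma acos_lt_decreasing x y : -1 <= x -> x < y -> y <= 1 -> acos y < acos x.
Proof.
move=> hx hxy hy; have [hx0 hxPI] := acos_bound x; have [hy0 hyPI] := acos_bound y.
apply: Rnot_le_lt => hle.
have : cos (acos y) <= cos (acos x).
  case: (Req_dec (acos x) (acos y)) => [-> | hne]; first lra.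
  by apply/Rge_le/Rgt_ge/cos_decreasing_1; lra.
rewrite !cos_acos; lra.
Qed.

Lemma acos_le_decreasing x y : -1 <= x -> x <= y -> y <= 1 -> acos y <= acos x.
Proof.
move=> hx hxy hy; case: (Req_dec x y) => [-> | hne]; first lra.
by left; apply: acos_lt_decreasing; lra.
Qed.

Section Tangency.

Variable c : R.
Hypothesis c_gt0 : 0 < c.

(* With u := a/(c+a) and v := b/(c+b), the law of cosines gives cos c^a_b = 1 - 2uv. *)
Lemma angle_acos a b : 0 < a -> 0 < b ->
  angle c a b = acos (1 - 2 * (a / (c + a)) * (b / (c + b))).
Proof. by move=> ha hb; rewrite /angle; congr acos; field; lra. Qed.

Lemma frac_bounds a : 0 < a -> 0 < a / (c + a) < 1.
Proof.
move=> ha; have : 1 - a / (c + a) = c / (c + a) by field; lra.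
have := Rdiv_lt_0_compat a (c + a) ha; have := Rdiv_lt_0_compat c (c + a) c_gt0; lra.
Qed.

Lemma frac_diff a a' : 0 < a -> 0 < a' ->
  a' / (c + a') - a / (c + a) = c * (a' - a) / ((c + a) * (c + a')).
Proof. by move=> ha ha'; field; lra. Qed.

Lemma frac_le_compat a a' : 0 < a -> a <= a' -> a / (c + a) <= a' / (c + a').
Proof.
move=> ha haa'; have := frac_diff ha (Rlt_le_trans _ _ _ ha haa').
suff : 0 <= c * (a' - a) / ((c + a) * (c + a')) by lra.
apply: Rmult_le_pos; [nra | left; apply: Rinv_0_lt_compat; nra].
Qed.

Lemma frac_lt_compat a a' : 0 < a -> a < a' -> a / (c + a) < a' / (c + a').
Proof.
move=> ha haa'; have := frac_diff ha (Rlt_trans _ _ _ ha haa').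
suff : 0 < c * (a' - a) / ((c + a) * (c + a')) by lra.
apply: Rdiv_lt_0_compat; nra.
Qed.

Lemma angle_le_compat a b a' b' : 0 < a -> 0 < b -> a <= a' -> b <= b' ->
  angle c a b <= angle c a' b'.
Proof.
move=> ha hb haa' hbb'; rewrite !angle_acos; try lra.
have := frac_bounds ha; have := frac_bounds hb.
have := frac_bounds (Rlt_le_trans _ _ _ ha haa').
have := frac_bounds (Rlt_le_trans _ _ _ hb hbb').
have := frac_le_compat ha haa'; have := frac_le_compat hb hbb'.
move: (a / _) (b / _) (a' / _) (b' / _) => u v u' v' *.
apply: acos_le_decreasing; nra.
Qed.

Lemma angle_lt_compat a b a' b' : 0 < a -> 0 < b -> a < a' -> b <= b' ->
  angle c a b < angle c a' b'.
Proof.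
move=> ha hb haa' hbb'; rewrite !angle_acos; try lra.
have := frac_bounds ha; have := frac_bounds hb.
have := frac_bounds (Rlt_trans _ _ _ ha haa').
have := frac_bounds (Rlt_le_trans _ _ _ hb hbb').
have := frac_lt_compat ha haa'; have := frac_le_compat hb hbb'.
move: (a / _) (b / _) (a' / _) (b' / _) => u v u' v' *.
apply: acos_lt_decreasing; nra.
Qed.

Lemma angle_scale t a b : 0 < t -> 0 < a -> 0 < b ->
  angle (c / t) (a / t) (b / t) = angle c a b.
Proof. by move=> ht ha hb; rewrite /angle; congr acos; field; lra. Qed.

End Tangency.

Lemma sum_map_le (T : eqType) (f g : T -> R) (s : seq T) :
  (forall y, y \in s -> f y <= g y) ->
  foldr Rplus 0 (map f s) <= foldr Rplus 0 (map g s).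
Proof.
elim: s => [|y s IH] /= hfg; first lra.
apply: Rplus_le_compat; first by apply: hfg; rewrite mem_head.
by apply: IH => z hz; apply: hfg; rewrite in_cons hz orbT.
Qed.

Lemma sum_map_lt (T : eqType) (f g : T -> R) (s : seq T) y0 :
  (forall y, y \in s -> f y <= g y) -> y0 \in s -> f y0 < g y0 ->
  foldr Rplus 0 (map f s) < foldr Rplus 0 (map g s).
Proof.
elim: s => [|y s IH] //= hfg; rewrite in_cons => /orP [/eqP <- | hy0] hlt.
  apply: Rplus_lt_le_compat => //.
  by apply: sum_map_le => z hz; apply: hfg; rewrite in_cons hz orbT.
apply: Rplus_le_lt_compat; first by apply: hfg; rewrite mem_head.
by apply: IH => // z hz; apply: hfg; rewrite in_cons hz orbT.
Qed.

Lemma mem_zip_rot1 (T : eqType) (s : seq T) p :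
  p \in s -> exists2 pq, pq \in zip s (rot 1 s) & pq.1 = p.
Proof.
rewrite -{1}(@unzip1_zip _ _ s (rot 1 s)) ?size_rot //.
by case/mapP => pq hpq ->; exists pq.
Qed.

Lemma alpha_at_scale n (g : nat -> R) t (x : code n) :
  0 < t -> (forall i, (i < n)%nat -> 0 < g i) ->
  alpha_at (fun i => g i / t) x = alpha_at g x.
Proof.
move=> ht hg; rewrite /alpha_at; congr foldr; apply: eq_map => pq /=.
by apply: angle_scale => //; apply: hg.
Qed.

Lemma alpha_at_lt n (g h : nat -> R) (x : code n) (p : 'I_n) :
  (forall i, (i < n)%nat -> 0 < g i /\ g i <= h i) ->
  g (val (center x)) = h (val (center x)) ->
  p \in petals x -> g (val p) < h (val p) ->
  alpha_at g x < alpha_at h x.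
Proof.
move=> hgh hc hp hlt; rewrite /alpha_at /= hc.
have hcpos : 0 < h (val (center x)) by rewrite -hc; apply: (hgh _ (ltn_ord _)).1.
have [pq hpq hpq1] := mem_zip_rot1 hp.
apply: (sum_map_lt _ hpq) => [[a b] _ /= |].
  have [ha haa'] := hgh _ (ltn_ord a); have [hb hbb'] := hgh _ (ltn_ord b).
  exact: angle_le_compat.
have [ha _] := hgh _ (ltn_ord pq.1); have [hb hbb'] := hgh _ (ltn_ord pq.2).
by apply: angle_lt_compat => //; rewrite hpq1.
Qed.

Lemma exists_argmax (f : nat -> R) n : (0 < n)%nat ->
  exists2 k, (k < n)%nat & forall j, (j < n)%nat -> f j <= f k.
Proof.
elim: n => [//|[|n] IH] _.
  by exists 0%nat => // j; rewrite ltnS leqn0 => /eqP ->; lra.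
have [k hk hmax] := IH isT.
have hsplit j : (j < n.+2)%nat -> j = n.+1 \/ (j < n.+1)%nat by lia.
case: (Rle_or_lt (f n.+1) (f k)) => hkn.
  by exists k => [|j /hsplit [-> | /hmax]] //; lia.
by exists n.+1 => // j /hsplit [-> | /hmax]; lra.
Qed.

Lemma div_le_of_ratio_le a b t : 0 < b -> 0 < t -> a / b <= t -> a / t <= b.
Proof.
move=> hb ht h; have : a / t - b = (a / b - t) * (b / t) by field; lra.
have := Rdiv_lt_0_compat b t hb ht; move: (a / b) (b / t) h => u v; nra.
Qed.

Lemma div_lt_of_ratio_lt a b t : 0 < b -> 0 < t -> a / b < t -> a / t < b.
Proof.
move=> hb ht h; have : a / t - b = (a / b - t) * (b / t) by field; lra.
have := Rdiv_lt_0_compat b t hb ht; move: (a / b) (b / t) h => u v; nra.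
Qed.

Lemma div_le_swap a b c d : 0 < a -> 0 < b -> 0 < c -> 0 < d ->
  a / c <= b / d -> a / b <= c / d.
Proof.
move=> ha hb hc hd h.
have -> : a / b = (a / c) * (c / b) by field; lra.
have -> : c / d = (b / d) * (c / b) by field; lra.
by apply: Rmult_le_compat_r => //; left; apply: Rdiv_lt_0_compat.
Qed.

Lemma ratio_max_at_last n (C : code n -> Prop) (rho sigma : nat -> R) :
  fundamental C ->
  (forall i : nat, (i < n)%nat -> 0 < rho i) ->
  (forall i : nat, (i < n)%nat -> 0 < sigma i) ->
  (forall x, C x -> alpha_at rho x <= 2 * PI /\ 2 * PI <= alpha_at sigma x) ->
  forall i, (i < n)%nat -> sigma i / rho i <= sigma (n - 1)%nat / rho (n - 1)%nat.
Proof.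
move=> [_ [_ hfund]] hrho hsigma halpha i hi.
set r := fun j => sigma j / rho j.
have [k0 hk0 hmax] := exists_argmax r (leq_ltn_trans (leq0n i) hi).
set t := r k0.
apply: Rle_trans (hmax _ hi) _; apply: Rnot_lt_le; rewrite -/t => hlt.
have ht : 0 < t by apply: Rdiv_lt_0_compat; [apply: hsigma | apply: hrho].
pose K (k : 'I_n) := r (val k) = t.
have hK : forall k, K k -> (val k <= n - 2)%nat.
  move=> [k hkn] hk; have : k <> (n - 1)%nat by move=> hk1; rewrite /K /r /= hk1 in hk; lra.
  by rewrite /=; lia.
have [D [hDC [hcenter [x [p [hDx [hp hpK]]]]]]] := hfund K (ex_intro _ (Ordinal hk0) erefl) hK.
have hKx : K (center x) by apply/hcenter; exists x.
have hsigma_t : forall j, (j < n)%nat -> 0 < sigma j / t /\ sigma j / t <= rho j.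
  move=> j hj; split; first by apply: Rdiv_lt_0_compat => //; apply: hsigma.
  exact: div_le_of_ratio_le (hrho j hj) ht (hmax j hj).
have hcx : sigma (val (center x)) / t = rho (val (center x)).
  have := hrho (val (center x)) (ltn_ord _); have := hsigma (val (center x)) (ltn_ord _).
  by rewrite /K /r in hKx; rewrite -hKx => hs hr; field; lra.
have hpx : sigma (val p) / t < rho (val p).
  apply: div_lt_of_ratio_lt (hrho _ (ltn_ord p)) ht _.
  have hle : r (val p) <= t := hmax (val p) (ltn_ord p).
  by case: (Rle_lt_or_eq_dec _ _ hle) => // heq; case: hpK.
have [hrho_x hsigma_x] := halpha x (hDC x hDx).
have := alpha_at_lt hsigma_t hcx hp hpx; rewrite alpha_at_scale //; lra.
Qed.

Theorem lemma5p1 (n : nat) (Hn : (2 <= n)%nat) (C : code n -> Prop)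
  (rho sigma : nat -> R) :
  fundamental C ->
  (forall i : nat, (i < n)%nat -> 0 < rho i) ->
  (forall i : nat, (i < n)%nat -> 0 < sigma i) ->
  (forall x, C x -> alpha_at rho x <= 2 * PI /\ 2 * PI <= alpha_at sigma x) ->
  sigma (n - 2)%nat / sigma (n - 1)%nat <= rho (n - 2)%nat / rho (n - 1)%nat.
Proof.
move=> hC hrho hsigma halpha.
have hn2 : (n - 2 < n)%nat by lia.
have hn1 : (n - 1 < n)%nat by lia.
apply: div_le_swap; try by [apply: hrho | apply: hsigma].
exact: ratio_max_at_last hC hrho hsigma halpha _ hn2.
Qed.
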